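(* Let $\mathcal M$ be a structural causal model with causal diagram $G$, containing a binary treatment $X$ (values $x,x'$), a binary outcome $Y$ (values $y,y'$), a set of discrete variables $C$ containing no descendant of $X$ in $G$, and a set of discrete variables $Z$ such that for all $x\ne x'$ in the range of $X$, $Y_x$ is independent of $(X, Z_{x'})$ conditionally on $(Z_x,C)$. Fix $c$ with $P(c)>0$ and $\beta,\gamma,\theta,\delta\in\mathbb R$, and let $$f(c)=\beta P(y_x,y'_{x'}\mid c)+\gamma P(y_x,y_{x'}\mid c)+\theta P(y'_x,y'_{x'}\mid c)+\delta P(y_{x'},y'_x\mid c).$$ Define $\sigma=\beta-\gamma-\theta+\delta$, $W=(\gamma-\delta)P(y_x\mid c)+\delta P(y_{x'}\mid c)+\theta P(y'_{x'}\mid c)$, $$L=\max\{0,\ P(y_x\mid c)-P(y_{x'}\mid c),\ P(y\mid c)-P(y_{x'}\mid c),\ P(y_x\mid c)-P(y\mid c)\},$$ $$U=\min\Big\{P(y_x\mid c),\ P(y'_{x'}\mid c),\ P(y,x\mid c)+P(y',x'\mid c),\ P(y_x\mid c)-P(y_{x'}\mid c)+P(y,x'\mid c)+P(y',x\mid c),$$ $$\qquad \sum_z\sum_{z'}\min\{P(y\mid z,x,c),P(y'\mid z',x',c)\}\cdot\min\{P(z_x\mid c),P(z'_{x'}\mid c)\}\Big\},$$ where $z,z'$ range over values of $Z$ (with the conditional probabilities defined). Then $$W+\sigma U\le f(c)\le W+\sigma L\ \text{ if }\sigma<0,\qquad W+\sigma L\le f(c)\le W+\sigma U\ \text{ if 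}\sigma>0.$$
   Context: For a value $x$ of $X$, $Y_x$ and $Z_x$ denote the counterfactual variables ''the value $Y$ (resp. $Z$) would take had $X$ been set to $x$''; $y_x$ is the event $Y_x=y$, $z_x$ the event $Z_x=z$, $z'_{x'}$ the event $Z_{x'}=z'$. Unsubscripted probabilities such as $P(y\mid z,x,c)$, $P(y,x\mid c)$ are observational. Consistency: $X=x$ implies $Y_x=Y$ and $Z_x=Z$. *)

From mathcomp Require Import all_boot all_order all_algebra.
Set Implicit Arguments. Unset Strict Implicit. Unset Printing Implicit Defensive.
Import Order.TTheory GRing.Theory Num.Theory.
Local Open Scope ring_scope.

Section Prob.
Variables (R : realFieldType) (Omega : finType).

Definition is_dist (p : Omega -> R) : Prop :=
  (forall w, 0 <= p w) /\ \sum_(w : Omega) p w = 1.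

Definition Pr (p : Omega -> R) (A : pred Omega) : R := \sum_(w | A w) p w.

(* conditional probability P(A | B) = P(A,B)/P(B) (0 when P(B) = 0) *)
Definition cPr (p : Omega -> R) (A B : pred Omega) : R :=
  Pr p (predI A B) / Pr p B.

Definition cond_indep (TA TB TD : finType) (p : Omega -> R)
  (A : Omega -> TA) (B : Omega -> TB) (D : Omega -> TD) : Prop :=
  forall a b d,
    Pr p [pred w | (A w == a) && (B w == b) && (D w == d)] * Pr p [pred w | D w == d]
    = Pr p [pred w | (A w == a) && (D w == d)] * Pr p [pred w | (B w == b) && (D w == d)].

End Prob.

(* The four joint probabilities P(y_x, y'_x' | c), P(y_x, y_x' | c), P(y'_x, y'_x' | c)
   and P(y_x', y'_x | c) are determined by the marginals P(y_x | c), P(y_x' | c) and the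
   first of them, the probability of necessity and sufficiency PNS; this makes
   f = W + sigma * PNS, so it suffices to prove L <= PNS <= U.  All bounds but the last
   term of U compare indicators pointwise, using consistency Y = Y_X.  For the last term,
   split PNS along the values (z, z') of (Z_x, Z_x'): each piece is at most
   P(y_x, z_x, z'_x', c) = P(y | z, x, c) P(z_x, z'_x', c), symmetrically at most
   P(y' | z', x', c) P(z_x, z'_x', c), and P(z_x, z'_x' | c) is at most
   min(P(z_x | c), P(z'_x' | c)). *)

From mathcomp Require Import all_boot all_order all_algebra.
From mathcomp Require Import ring lra.
Set Implicit Arguments. Unset Strict Implicit. Unset Printing Implicit Defensive.
Import Order.TTheory GRing.Theory Num.Theory.
Local Open Scope ring_scope.

Section ConditionalProbability.
Variables (R : realFieldType) (Omega : finType) (p : Omega -> R).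
Hypothesis p_ge0 : forall w, 0 <= p w.

Lemma eq_Pr (A B : pred Omega) : A =1 B -> Pr p A = Pr p B.
Proof. exact: eq_bigl. Qed.

Lemma Pr_ge0 (A : pred Omega) : 0 <= Pr p A.
Proof. by apply: sumr_ge0 => w _; apply: p_ge0. Qed.

Lemma Pr_indicator (A : pred Omega) : Pr p A = \sum_w (A w)%:R * p w.
Proof.
by rewrite /Pr big_mkcond; apply: eq_bigr => w _; case: (A w); rewrite ?mul1r ?mul0r.
Qed.

Lemma le_Pr (A B : pred Omega) : (forall w, A w -> B w) -> Pr p A <= Pr p B.
Proof.
move=> AB; rewrite !Pr_indicator; apply: ler_sum => w _.
by rewrite ler_wpM2r // ler_nat; case: (A w) (AB w) => // ->.
Qed.

Lemma Pr_le_add (A B1 B2 : pred Omega) :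
  (forall w, A w <= B1 w + B2 w)%N -> Pr p A <= Pr p B1 + Pr p B2.
Proof.
move=> h; rewrite !Pr_indicator -big_split /=; apply: ler_sum => w _.
by rewrite -mulrDl -natrD ler_wpM2r // ler_nat.
Qed.

Lemma Pr_eq_add (A B1 B2 : pred Omega) :
  (forall w, A w = B1 w + B2 w :> nat)%N -> Pr p A = Pr p B1 + Pr p B2.
Proof.
move=> h; rewrite !Pr_indicator -big_split /=; apply: eq_bigr => w _.
by rewrite -mulrDl -natrD h.
Qed.

Lemma cPr_ge0 (A D : pred Omega) : 0 <= cPr p A D.
Proof. by rewrite divr_ge0 ?Pr_ge0. Qed.

Lemma cPr_le_add (A B1 B2 D : pred Omega) :
  (forall w, A w <= B1 w + B2 w)%N -> cPr p A D <= cPr p B1 D + cPr p B2 D.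
Proof.
move=> h; rewrite /cPr -mulrDl ler_wpM2r ?invr_ge0 ?Pr_ge0 //.
by apply: Pr_le_add => w /=; case: (D w); rewrite ?andbT ?andbF.
Qed.

Lemma cPr_eq_add (A B1 B2 D : pred Omega) :
  (forall w, A w = B1 w + B2 w :> nat)%N -> cPr p A D = cPr p B1 D + cPr p B2 D.
Proof.
move=> h; rewrite /cPr -mulrDl; congr (_ * _).
by apply: Pr_eq_add => w /=; case: (D w); rewrite ?andbT ?andbF.
Qed.

Lemma Pr_partition (T : finType) (F : Omega -> T) (A : pred Omega) :
  Pr p A = \sum_(t : T) Pr p [pred w | A w && (F w == t)].
Proof.
rewrite Pr_indicator; under [RHS]eq_bigr do rewrite Pr_indicator.
rewrite exchange_big /=; apply: eq_bigr => w _; rewrite -mulr_suml.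
rewrite (bigD1 (F w)) //= eqxx andbT big1 ?addr0 // => t /negbTE Ft.
by rewrite eq_sym Ft andbF.
Qed.

Lemma Pr_comp (T T' : finType) (F : Omega -> T) (g : T -> T') (A : pred Omega) b :
  Pr p [pred w | A w && (g (F w) == b)]
  = \sum_(t | g t == b) Pr p [pred w | A w && (F w == t)].
Proof.
rewrite (Pr_partition F) [RHS]big_mkcond /=; apply: eq_bigr => t _.
case: eqP => [<-|/eqP gtb].
  by apply: eq_Pr => w /=; case: (eqVneq (F w) t) => [->|]; rewrite ?eqxx ?andbF ?andbT.
rewrite /Pr big_pred0 // => w /=.
by case: (eqVneq (F w) t) => [->|]; rewrite ?andbF ?andbT // (negbTE gtb) andbF.
Qed.

Lemma cond_indep_comp (TA TB TB' TD : finType) (A : Omega -> TA) (B : Omega -> TB)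
    (D : Omega -> TD) (g : TB -> TB') :
  cond_indep p A B D -> cond_indep p A (g \o B) D.
Proof.
move=> AB a b d.
have sum_fibre (P : pred Omega) :
    Pr p [pred w | P w && (g (B w) == b) && (D w == d)]
    = \sum_(t | g t == b) Pr p [pred w | P w && (B w == t) && (D w == d)].
  rewrite (eq_Pr (B := [pred w | (P w && (D w == d)) && (g (B w) == b)])); last first.
    by move=> w /=; rewrite andbAC.
  by rewrite Pr_comp; apply: eq_bigr => t _; apply: eq_Pr => w /=; rewrite andbAC.
rewrite /= (sum_fibre (fun w => A w == a)) (sum_fibre xpredT) mulr_suml mulr_sumr.
by apply: eq_bigr => t _; apply: AB.
Qed.

Lemma cond_indep_pair (TA TB TD1 TD2 : finType) (A : Omega -> TA) (B : Omega -> TB)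
    (D1 : Omega -> TD1) (D2 : Omega -> TD2) :
  cond_indep p A B (fun w => (D1 w, D2 w)) -> forall a b d1 d2,
  Pr p [pred w | (A w == a) && (B w == b) && (D1 w == d1) && (D2 w == d2)]
    * Pr p [pred w | (D1 w == d1) && (D2 w == d2)]
  = Pr p [pred w | (A w == a) && (D1 w == d1) && (D2 w == d2)]
    * Pr p [pred w | (B w == b) && (D1 w == d1) && (D2 w == d2)].
Proof.
move=> AB a b d1 d2.
have E (P : pred Omega) : Pr p [pred w | P w && ((D1 w, D2 w) == (d1, d2))]
                        = Pr p [pred w | P w && (D1 w == d1) && (D2 w == d2)].
  by apply: eq_Pr => w /=; rewrite xpair_eqE andbA.
move: (AB a b (d1, d2)); rewrite /=.
by rewrite (E (fun w => (A w == a) && (B w == b))) (E xpredT) (E (fun w => A w == a))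
           (E (fun w => B w == b)).
Qed.

End ConditionalProbability.

Lemma eq_ratio_mul (R : realFieldType) (r s t m u v : R) :
  0 <= r <= u -> 0 <= m <= u -> t != 0 ->
  r * u = v * m -> s * u = v * t -> r = s / t * m.
Proof.
move=> /andP[r_ge0 r_le] /andP[m_ge0 m_le] t_neq0 ru su.
have [u0|u_neq0] := eqVneq u 0.
  have r0 : r = 0 by apply/eqP; rewrite eq_le r_ge0 -u0 r_le.
  have m0 : m = 0 by apply/eqP; rewrite eq_le m_ge0 -u0 m_le.
  by rewrite r0 m0 mulr0.
have -> : s = v * t / u by rewrite -su mulfK.
by apply: (mulIf u_neq0); rewrite ru; field; rewrite t_neq0 u_neq0.
Qed.

Lemma affine_bounds (R : realFieldType) (W s a L U : R) : L <= a <= U ->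
  (s < 0 -> W + s * U <= W + s * a <= W + s * L) /\
  (0 < s -> W + s * L <= W + s * a <= W + s * U).
Proof.
move=> /andP[La aU]; split=> s0; rewrite !lerD2l.
  by rewrite !ler_wnM2l ?La ?aU ?ltW.
by rewrite !ler_wpM2l ?La ?aU ?ltW.
Qed.

Section PotentialOutcomes.
Variables (R : realFieldType) (Omega : finType) (p : Omega -> R).
Hypothesis p_ge0 : forall w, 0 <= p w.
Variables (TC TZ : finType) (X Y : Omega -> bool) (C : Omega -> TC) (Z : Omega -> TZ).
Variables (Yx : bool -> Omega -> bool) (Zx : bool -> Omega -> TZ).
Hypothesis consistency : forall x0 w, X w = x0 -> Yx x0 w = Y w /\ Zx x0 w = Z w.

(* Y_x0 _||_ Z_x0' | Z_x0, C factors the joint law through P(y_x0 | z_x0, c), and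
   Y_x0 _||_ X | Z_x0, C together with consistency identifies the latter with the
   observational P(y | z, x0, c). *)
Lemma Pr_Yx_Zx_factor x0 y0 z0 z1 c :
  cond_indep p (Yx x0) (fun w => (X w, Zx (~~ x0) w)) (fun w => (Zx x0 w, C w)) ->
  0 < Pr p [pred w | (Z w == z0) && (X w == x0) && (C w == c)] ->
  Pr p [pred w | (Yx x0 w == y0) && (Zx (~~ x0) w == z1) && (Zx x0 w == z0) && (C w == c)]
  = cPr p [pred w | Y w == y0] [pred w | (Z w == z0) && (X w == x0) && (C w == c)]
    * Pr p [pred w | (Zx (~~ x0) w == z1) && (Zx x0 w == z0) && (C w == c)].
Proof.
move=> indep t_gt0.
set u := Pr p [pred w | (Zx x0 w == z0) && (C w == c)].
set v := Pr p [pred w | (Yx x0 w == y0) && (Zx x0 w == z0) && (C w == c)].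
apply: (@eq_ratio_mul _ _ _ _ _ u v).
- by rewrite Pr_ge0 // le_Pr // => w /= /andP[/andP[_ ->] ->].
- by rewrite Pr_ge0 // le_Pr // => w /= /andP[/andP[_ ->] ->].
- by rewrite gt_eqF.
- exact: cond_indep_pair (cond_indep_comp snd indep) y0 z1 z0 c.
apply: etrans (etrans _ (cond_indep_pair (cond_indep_comp fst indep) y0 x0 z0 c)) _.
  congr (_ * _); apply: eq_Pr => w /=.
  case: (eqVneq (X w) x0) => [Xw|Xw]; last by rewrite !(andbF, andFb).
  by have [-> ->] := consistency Xw; rewrite !andbT andbA.
congr (_ * _); apply: eq_Pr => w /=.
case: (eqVneq (X w) x0) => [Xw|Xw]; last by rewrite !(andbF, andFb).
by have [_ ->] := consistency Xw; rewrite !andbT.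
Qed.

Lemma Y_consistent w : Y w = Yx (X w) w.
Proof. by have [] := consistency (erefl (X w)). Qed.

Variables (x y : bool) (c : TC).
Local Notation Pc A := (cPr p A [pred w | C w == c]).
Local Notation pns := (Pc [pred w | (Yx x w == y) && (Yx (~~ x) w == ~~ y)]).

Lemma Pc_Yx_marginals :
  [/\ Pc [pred w | Yx x w == y]
      = pns + Pc [pred w | (Yx x w == y) && (Yx (~~ x) w == y)],
      Pc [pred w | Yx (~~ x) w == y]
      = Pc [pred w | (Yx x w == y) && (Yx (~~ x) w == y)]
        + Pc [pred w | (Yx (~~ x) w == y) && (Yx x w == ~~ y)]
    & Pc [pred w | Yx (~~ x) w == ~~ y]
      = pns + Pc [pred w | (Yx x w == ~~ y) && (Yx (~~ x) w == ~~ y)]].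
Proof.
split; apply: cPr_eq_add => w /=;
  by case: x y => [] [] /=; case: (Yx true w) (Yx false w) => [] [].
Qed.

Lemma pns_ge_lower_bound :
  Num.max 0 (Num.max (Pc [pred w | Yx x w == y] - Pc [pred w | Yx (~~ x) w == y])
                     (Num.max (Pc [pred w | Y w == y] - Pc [pred w | Yx (~~ x) w == y])
                              (Pc [pred w | Yx x w == y] - Pc [pred w | Y w == y])))
  <= pns.
Proof.
rewrite !ge_max cPr_ge0 //=; apply/and3P; split; rewrite lerBlDr;
  apply: cPr_le_add => // w; rewrite /= ?Y_consistent;
  by case: (X w) x y => [] [] [] /=; case: (Yx true w) (Yx false w) => [] [].
Qed.

Hypothesis indep : forall x0 : bool,
  cond_indep p (Yx x0) (fun w => (X w, Zx (~~ x0) w)) (fun w => (Zx x0 w, C w)).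
Hypothesis Zxc_gt0 : forall z, 0 < Pr p [pred w | (Z w == z) && (X w == x) && (C w == c)].
Hypothesis Zx'c_gt0 : forall z, 0 < Pr p [pred w | (Z w == z) && (X w == ~~ x) && (C w == c)].

Lemma Pr_pns_Zx_le z z' :
  Pr p [pred w | (Yx x w == y) && (Yx (~~ x) w == ~~ y) && (C w == c)
                 && (Zx x w == z) && (Zx (~~ x) w == z')]
  <= Num.min (cPr p [pred w | Y w == y]
                [pred w | (Z w == z) && (X w == x) && (C w == c)])
             (cPr p [pred w | Y w == ~~ y]
                [pred w | (Z w == z') && (X w == ~~ x) && (C w == c)])
     * Pr p [pred w | (Zx (~~ x) w == z') && (Zx x w == z) && (C w == c)].
Proof.
have m_sym : Pr p [pred w | (Zx x w == z) && (Zx (~~ x) w == z') && (C w == c)]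
           = Pr p [pred w | (Zx (~~ x) w == z') && (Zx x w == z) && (C w == c)].
  by apply: eq_Pr => w /=; rewrite (andbC (Zx x w == z)).
rewrite minr_pMl ?Pr_ge0 // le_min; apply/andP; split.
  rewrite -(@Pr_Yx_Zx_factor x y z z' c (indep x) (Zxc_gt0 z)).
  by apply: le_Pr => // w /= /andP[/andP[/andP[/andP[-> _] ->] ->] ->].
have := @Pr_Yx_Zx_factor (~~ x) (~~ y) z' z c (indep (~~ x)) (Zx'c_gt0 z').
rewrite negbK m_sym => <-.
by apply: le_Pr => // w /= /andP[/andP[/andP[/andP[_ ->] ->] ->] ->].
Qed.

Lemma pns_le_Zsum :
  pns <= \sum_(z : TZ) \sum_(z' : TZ)
           Num.min (cPr p [pred w | Y w == y]
                      [pred w | (Z w == z) && (X w == x) && (C w == c)])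
                   (cPr p [pred w | Y w == ~~ y]
                      [pred w | (Z w == z') && (X w == ~~ x) && (C w == c)])
         * Num.min (Pc [pred w | Zx x w == z]) (Pc [pred w | Zx (~~ x) w == z']).
Proof.
rewrite {1}/cPr (Pr_partition p (Zx x)) mulr_suml; apply: ler_sum => z _.
rewrite (Pr_partition p (Zx (~~ x))) mulr_suml; apply: ler_sum => z' _.
have PrC_inv_ge0 : 0 <= (Pr p [pred w | C w == c])^-1 by rewrite invr_ge0 Pr_ge0.
apply: le_trans (ler_wpM2r PrC_inv_ge0 (Pr_pns_Zx_le z z')) _.
rewrite -mulrA ler_wpM2l ?le_min ?cPr_ge0 //.
apply/andP; split; rewrite ler_wpM2r // le_Pr // => w /=.
  by case/andP=> /andP[_ ->] ->.
by case/andP=> /andP[-> _] ->.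
Qed.

Lemma pns_le_upper_bound :
  pns <= Num.min (Pc [pred w | Yx x w == y]) (Num.min (Pc [pred w | Yx (~~ x) w == ~~ y])
          (Num.min (Pc [pred w | (Y w == y) && (X w == x)]
                    + Pc [pred w | (Y w == ~~ y) && (X w == ~~ x)])
          (Num.min (Pc [pred w | Yx x w == y] - Pc [pred w | Yx (~~ x) w == y]
                    + Pc [pred w | (Y w == y) && (X w == ~~ x)]
                    + Pc [pred w | (Y w == ~~ y) && (X w == x)])
             (\sum_(z : TZ) \sum_(z' : TZ)
                Num.min (cPr p [pred w | Y w == y]
                           [pred w | (Z w == z) && (X w == x) && (C w == c)])
                        (cPr p [pred w | Y w == ~~ y]
                           [pred w | (Z w == z') && (X w == ~~ x) && (C w == c)])
              * Num.min (Pc [pred w | Zx x w == z]) (Pc [pred w | Zx (~~ x) w == z']))))).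
Proof.
have [Pyx_split Pyx'_split Py'x'_split] := Pc_Yx_marginals.
rewrite !le_min pns_le_Zsum andbT; apply/and4P; split.
- by rewrite Pyx_split lerDl cPr_ge0.
- by rewrite Py'x'_split lerDl cPr_ge0.
- apply: cPr_le_add => // w; rewrite /= Y_consistent.
  by case: (X w) x y => [] [] [] /=; case: (Yx true w) (Yx false w) => [] [].
have e_le : Pc [pred w | (Yx (~~ x) w == y) && (Yx x w == ~~ y)]
            <= Pc [pred w | (Y w == y) && (X w == ~~ x)]
               + Pc [pred w | (Y w == ~~ y) && (X w == x)].
  apply: cPr_le_add => // w; rewrite /= Y_consistent.
  by case: (X w) x y => [] [] [] /=; case: (Yx true w) (Yx false w) => [] [].
by rewrite Pyx_split Pyx'_split; lra.
Qed.

End PotentialOutcomes.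

Theorem theorem2 (R : realFieldType) (Omega : finType) (p : Omega -> R)
  (TC TZ : finType)
  (X Y : Omega -> bool) (C : Omega -> TC) (Z : Omega -> TZ)
  (Yx : bool -> Omega -> bool) (Zx : bool -> Omega -> TZ)
  (x y : bool) (c : TC) (beta gamma theta delta : R) :
  is_dist p ->
  (* consistency: X = x0 implies Y_x0 = Y and Z_x0 = Z *)
  (forall x0 w, X w = x0 -> Yx x0 w = Y w /\ Zx x0 w = Z w) ->
  (* for all x0 <> x0' : Y_x0 independent of (X, Z_x0') given (Z_x0, C) *)
  (forall x0 : bool, cond_indep p (Yx x0) (fun w => (X w, Zx (~~ x0) w))
                                (fun w => (Zx x0 w, C w))) ->
  0 < Pr p [pred w | C w == c] ->
  (* the conditional probabilities P(y | z, x, c), P(y' | z', x', c) are defined *)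
  (forall z : TZ, 0 < Pr p [pred w | (Z w == z) && (X w == x) && (C w == c)]) ->
  (forall z : TZ, 0 < Pr p [pred w | (Z w == z) && (X w == ~~ x) && (C w == c)]) ->
  let x' := ~~ x in
  let y' := ~~ y in
  let Pc (A : pred Omega) := cPr p A [pred w | C w == c] in
  let Pyx := Pc [pred w | Yx x w == y] in
  let Pyx' := Pc [pred w | Yx x' w == y] in
  let Py'x' := Pc [pred w | Yx x' w == y'] in
  let Py := Pc [pred w | Y w == y] in
  let f := beta * Pc [pred w | (Yx x w == y) && (Yx x' w == y')]
         + gamma * Pc [pred w | (Yx x w == y) && (Yx x' w == y)]
         + theta * Pc [pred w | (Yx x w == y') && (Yx x' w == y')]
         + delta * Pc [pred w | (Yx x' w == y) && (Yx x w == y')] in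
  let sigma := beta - gamma - theta + delta in
  let W := (gamma - delta) * Pyx + delta * Pyx' + theta * Py'x' in
  let L := Num.max 0 (Num.max (Pyx - Pyx') (Num.max (Py - Pyx') (Pyx - Py))) in
  let U := Num.min Pyx (Num.min Py'x'
             (Num.min (Pc [pred w | (Y w == y) && (X w == x)]
                       + Pc [pred w | (Y w == y') && (X w == x')])
             (Num.min (Pyx - Pyx' + Pc [pred w | (Y w == y) && (X w == x')]
                                  + Pc [pred w | (Y w == y') && (X w == x)])
                (\sum_(z : TZ) \sum_(z' : TZ)
                   Num.min (cPr p [pred w | Y w == y]
                              [pred w | (Z w == z) && (X w == x) && (C w == c)])
                           (cPr p [pred w | Y w == y']
                              [pred w | (Z w == z') && (X w == x') && (C w == c)])
                 * Num.min (Pc [pred w | Zx x w == z]) (Pc [pred w | Zx x' w == z']))))) in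
  (sigma < 0 -> W + sigma * U <= f <= W + sigma * L) /\
  (0 < sigma -> W + sigma * L <= f <= W + sigma * U).
Proof.
move=> [p_ge0 _] consistency indep _ Zxc_gt0 Zx'c_gt0 x' y' Pc Pyx Pyx' Py'x' Py f sigma W L U.
have [Pyx_split Pyx'_split Py'x'_split] := Pc_Yx_marginals p C Yx x y c.
have -> : f = W + sigma * Pc [pred w | (Yx x w == y) && (Yx x' w == y')].
  by rewrite /f /W /Pyx /Pyx' /Py'x' /Pc /x' /y' Pyx_split Pyx'_split Py'x'_split /sigma; ring.
have lower := pns_ge_lower_bound p_ge0 C consistency x y c.
have upper := pns_le_upper_bound p_ge0 consistency y indep Zxc_gt0 Zx'c_gt0.
by apply: affine_bounds; apply/andP; split; [exact lower | exact upper].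
Qed.
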